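(* Let $G$ be a graph and $v$ a vertex of $G$. Then $v$ is always-activated if and only if $v$ is $\mathbf{c}_v$-always-activated, i.e. if and only if $v$ is fixed, $\mathbf{c}_v$ is solvable, and $\mathbf{p}(v)=1$ for every pattern $\mathbf{p}$ with $N(G)\mathbf{p}=\mathbf{c}_v$.
   Context: For a finite simple graph $G$ with vertex set $\{v_1,\dots,v_n\}$, the closed adjacency matrix $N(G)$ is the $n\times n$ matrix over $\mathbb{Z}_2$ whose $(i,j)$ entry is $1$ iff $i=j$ or $v_i$ is adjacent to $v_j$. Vectors in $\mathbb{Z}_2^{V(G)}$ are patterns/configurations; $\mathbf{p}$ solves $\mathbf{c}$ if $N(G)\mathbf{p}=\mathbf{c}$, and $\mathbf{c}$ is solvable if it has a solving pattern. Null patterns are elements of $\operatorname{Ker}(N(G))$. $\mathbf{1}$ is the all-ones configuration (always solvable); $\mathbf{c}_v$ is the configuration with $\mathbf{c}_v(x)=1$ iff $x=v$. A vertex $v$ is half-activated if $\boldsymbol{\ell}(v)=1$ for some null pattern $\boldsymbol{\ell}$, and fixed otherwise. A fixed vertex $v$ is always-activated if $\mathbf{p}(v)=1$ for every $\mathbf{p}$ with $N(G)\mathbf{p}=\mathbf{1}$. For a solvable configuration $\mathbf{c}$, a fixed vertex $v$ is $\mathbf{c}$-always-activated if $\mathbf{p}(v)=1$ for every $\mathbf{p}$ with $N(G)\mathbf{p}=\mathbf{c}$. *)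

From mathcomp Require Import all_boot all_order all_algebra.
Set Implicit Arguments. Unset Strict Implicit. Unset Printing Implicit Defensive.
Import GRing.Theory.
Local Open Scope ring_scope.

Definition simple_graph (n : nat) (adj : rel 'I_n) : Prop :=
  symmetric adj /\ irreflexive adj.

Definition closedN (n : nat) (adj : rel 'I_n) : 'M['F_2]_n :=
  \matrix_(i, j) (((i == j) || adj i j) : nat)%:R.

Definition solves n (adj : rel 'I_n) (p c : 'cV['F_2]_n) : Prop :=
  closedN adj *m p = c.

Definition solvable n (adj : rel 'I_n) (c : 'cV['F_2]_n) : Prop :=
  exists p, solves adj p c.

Definition null_pattern n (adj : rel 'I_n) (l : 'cV['F_2]_n) : Prop :=
  closedN adj *m l = 0.

Definition all_ones (n : nat) : 'cV['F_2]_n := const_mx 1.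

Definition cvec n (v : 'I_n) : 'cV['F_2]_n := \col_x ((x == v) : nat)%:R.

Definition half_activated n (adj : rel 'I_n) (v : 'I_n) : Prop :=
  exists l, null_pattern adj l /\ l v 0 = 1.

Definition fixed_vertex n (adj : rel 'I_n) (v : 'I_n) : Prop :=
  ~ half_activated adj v.

Definition always_activated n (adj : rel 'I_n) (v : 'I_n) : Prop :=
  fixed_vertex adj v /\ forall p, solves adj p (all_ones n) -> p v 0 = 1.

Definition c_always_activated n (adj : rel 'I_n) (c : 'cV['F_2]_n) (v : 'I_n)
  : Prop :=
  solvable adj c /\ fixed_vertex adj v /\
  forall p, solves adj p c -> p v 0 = 1.

From mathcomp Require Import all_boot all_order all_algebra.
Import GRing.Theory.
Set Implicit Arguments.
Unset Strict Implicit.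
Local Open Scope ring_scope.

(* Over Z_2 the closed adjacency matrix N is symmetric with unit diagonal, so
   the quadratic form q^T N q equals 1^T q: the off-diagonal terms cancel in
   pairs.  Hence 1 is orthogonal to Ker N = Ker N^T and is solvable; likewise
   c_v is solvable when v is fixed.  If N p = 1 and N q = c_v then
   p(v) = c_v^T p = q^T N p = q^T 1 = q^T N q = q^T c_v = q(v),
   so every solution of N p = 1 agrees at v with every solution of N q = c_v. *)

Lemma F2_cases (x : 'F_2) : x = 0 \/ x = 1.
Proof. by case: x => [[|[|k]] // ?]; [left | right]; apply/val_inj. Qed.

Lemma F2_expr2 (x : 'F_2) : x ^+ 2 = x.
Proof. by case: (F2_cases x) => ->; rewrite ?expr0n ?expr1n. Qed.

Lemma trmx_mul_cV (R : comNzRingType) n (x y : 'cV[R]_n) : x^T *m y = y^T *m x.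
Proof.
by rewrite -[RHS]trmxK trmx_mul trmxK [LHS]mx11_scalar [RHS]mx11_scalar !mxE.
Qed.

Section Char2.
Variables (R : comNzRingType) (n : nat).
Hypothesis pchar2_R : 2 \in [pchar R].

Lemma sum_symmetric_pchar2 (f : 'I_n -> 'I_n -> R) :
  (forall i j, f i j = f j i) -> \sum_i \sum_j f i j = \sum_i f i i.
Proof.
move=> fC.
have lower_upper :
    \sum_(i : 'I_n) \sum_(j : 'I_n | (j < i)%N) f i j
    = \sum_(i : 'I_n) \sum_(j : 'I_n | (i < j)%N) f i j.
  rewrite (exchange_big_dep predT) //=.
  by apply: eq_bigr => i _; apply: eq_bigr => j _; apply: fC.
have split_row (i : 'I_n) : \sum_j f i j =
    f i i + (\sum_(j : 'I_n | (j < i)%N) f i j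
             + \sum_(j : 'I_n | (i < j)%N) f i j).
  rewrite (bigD1 i) //= (bigID (fun j : 'I_n => (j < i)%N)) /=.
  by congr (_ + (_ + _)); apply: eq_bigl => j; rewrite -val_eqE neq_ltn;
     case: ltngtP.
under eq_bigr do rewrite split_row.
by rewrite big_split big_split /= lower_upper addrr_pchar2 // addr0.
Qed.

Lemma quadratic_form_pchar2 (A : 'M[R]_n) (x : 'cV[R]_n) : A^T = A ->
  x^T *m A *m x = (\sum_i A i i * x i 0 ^+ 2)%:M.
Proof.
move=> symA; rewrite [LHS]mx11_scalar; congr _%:M.
rewrite mxE; under eq_bigr do rewrite mxE big_distrl.
rewrite /= sum_symmetric_pchar2 => [|i j]; last first.
  by rewrite !mxE -{1}symA mxE [RHS]mulrAC mulrC mulrA.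
by apply: eq_bigr => i _; rewrite mxE mulrAC mulrC -expr2.
Qed.

End Char2.

Lemma exists_mulmx_of_orth_ker (F : fieldType) m n (A : 'M[F]_(m, n))
    (c : 'cV[F]_m) :
  (forall l : 'cV_m, A^T *m l = 0 -> c^T *m l = 0) -> exists p, A *m p = c.
Proof.
move=> orth.
have /submxP [D defc] : (c^T <= A^T)%MS.
  rewrite submxE; apply/eqP/matrixP => i j.
  have : col j (c^T *m cokermx A^T) = 0.
    rewrite colE -mulmxA -colE; apply: orth.
    by rewrite colE mulmxA mulmx_coker mul0mx.
  by move/matrixP/(_ i 0); rewrite !mxE.
by exists D^T; rewrite -[A]trmxK -trmx_mul -defc trmxK.
Qed.

Section ClosedNeighbourhood.
Variables (n : nat) (adj : rel 'I_n).
Hypothesis simple_adj : simple_graph adj.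
Local Notation N := (closedN adj).

Lemma trmx_closedN : N^T = N.
Proof.
by case: simple_adj => symAdj _; apply/matrixP => i j; rewrite !mxE eq_sym symAdj.
Qed.

Lemma closedN_diag i : N i i = 1.
Proof. by rewrite mxE eqxx. Qed.

Lemma closedN_quadratic (q : 'cV_n) : q^T *m N *m q = (all_ones n)^T *m q.
Proof.
rewrite quadratic_form_pchar2 ?trmx_closedN ?pchar_Fp // [RHS]mx11_scalar.
by congr _%:M; rewrite mxE; apply: eq_bigr => i _;
   rewrite closedN_diag F2_expr2 !mxE !mul1r.
Qed.

Lemma null_pattern_orth_ones l : null_pattern adj l -> (all_ones n)^T *m l = 0.
Proof. by move=> Nl; rewrite -closedN_quadratic -mulmxA Nl mulmx0. Qed.

Lemma solvable_of_orth_null c :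
  (forall l, null_pattern adj l -> c^T *m l = 0) -> solvable adj c.
Proof. by move=> orth; apply: exists_mulmx_of_orth_ker; rewrite trmx_closedN. Qed.

Lemma all_ones_solvable : solvable adj (all_ones n).
Proof. exact: solvable_of_orth_null null_pattern_orth_ones. Qed.

Lemma trmx_cvec_mul v (x : 'cV_n) : (cvec v)^T *m x = (x v 0)%:M.
Proof.
rewrite [LHS]mx11_scalar mxE (bigD1 v) //= big1 => [|i /negbTE neq_iv].
  by rewrite !mxE eqxx mul1r addr0.
by rewrite !mxE neq_iv mul0r.
Qed.

Lemma cvec_solvable v : fixed_vertex adj v -> solvable adj (cvec v).
Proof.
move=> fixed_v; apply: solvable_of_orth_null => l Nl.
rewrite trmx_cvec_mul; case: (F2_cases (l v 0)) => [-> | lv1].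
  exact: raddf0.
by case: fixed_v; exists l.
Qed.

Lemma solutions_agree_at v p q :
  solves adj p (all_ones n) -> solves adj q (cvec v) -> p v 0 = q v 0.
Proof.
move=> Np Nq.
have : (p v 0)%:M = (q v 0)%:M :> 'M_1.
  rewrite -!trmx_cvec_mul -{1}Nq trmx_mul trmx_closedN -mulmxA Np.
  by rewrite trmx_mul_cV -closedN_quadratic -mulmxA Nq trmx_mul_cV.
by move/matrixP/(_ 0 0); rewrite !mxE eqxx !mulr1n.
Qed.

End ClosedNeighbourhood.

Theorem proposition2p5 (n : nat) (adj : rel 'I_n) (v : 'I_n) :
  simple_graph adj ->
  (always_activated adj v <-> c_always_activated adj (cvec v) v).
Proof.
move=> simple_adj; split.
- case=> fixed_v ones_v; split; first exact: cvec_solvable.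
  split=> // q Nq; have [p Np] := all_ones_solvable simple_adj.
  by rewrite -(solutions_agree_at simple_adj Np Nq) ones_v.
- case=> [[q Nq] [fixed_v cv_v]]; split=> // p Np.
  by rewrite (solutions_agree_at simple_adj Np Nq) cv_v.
Qed.
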